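(* Let $n\ge 2$ be an integer, $A\subseteq L_n$, and let $B\subseteq L_n\setminus A$ be a closed uncountable subset of $(L_n,\tau_E|_{L_n})$ (for example, a subset homeomorphic to the Cantor set). Then $(X_n,\tau(A))$ is not Lindelöf.
   Context: For $\overline{x},\overline{a}\in\mathbb R^n$ let $|\overline{x}-\overline{a}|$ be the Euclidean distance and $B(\overline{a},\epsilon)=\{\overline{x}\in\mathbb R^n:|\overline{x}-\overline{a}|<\epsilon\}$. Let $P_n=\{\overline{x}\in\mathbb R^n: x_n>0\}$, $L_n=\{\overline{x}\in\mathbb R^n: x_n=0\}$, $X_n=P_n\cup L_n$, and let $\tau_E$ denote the Euclidean topology on $X_n$. For $\overline{a}\in L_n$ and $\epsilon>0$ put $\overline{a(\epsilon)}=(a_1,\dots,a_{n-1},\epsilon)$ and $\tilde B(\overline{a},\epsilon)=\{\overline{a}\}\cup B(\overline{a(\epsilon)},\epsilon)$. For $A\subseteq L_n$, the topology $\tau(A)$ on $X_n$ is generated by the local bases: at $\overline{a}\in P_n$, the sets $B(\overline{a},\epsilon)$ with $0<\epsilon<a_n$; at $\overline{a}\in A$, the sets $B(\overline{a},\epsilon)\cap X_n$ with $\epsilon>0$; at $\overline{a}\in L_n\setminus A$, the sets $\tilde B(\overline{a},\epsilon)$ with $\epsilon>0$. *)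

From HB Require Import structures.
From mathcomp Require Import all_boot all_order all_algebra.
From mathcomp Require Import all_classical all_reals.
From mathcomp Require Import Rstruct.
From Stdlib Require Import Rdefinitions.
Set Implicit Arguments. Unset Strict Implicit. Unset Printing Implicit Defensive.
Import Order.TTheory GRing.Theory Num.Theory.
Local Open Scope classical_set_scope.
Local Open Scope ring_scope.

(* Points of R^n : coordinates indexed by 'I_n (coordinate x_k is x (k-1)). *)
Definition pt (n : nat) := 'I_n -> Rdefinitions.R.

Definition edist n (x a : pt n) : R := Num.sqrt (\sum_(i < n) (x i - a i) ^+ 2).

Definition eball n (a : pt n) (eps : R) : set (pt n) := [set x | edist x a < eps].

(* last coordinate x_n (index n-1); for n = 0 it is 0 by convention, irrelevant here *)
Definition lastc n (x : pt n) : R :=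
  match (insub n.-1 : option 'I_n) with Some i => x i | None => 0 end.

Definition Pn n : set (pt n) := [set x | 0 < lastc x].
Definition Ln n : set (pt n) := [set x | lastc x = 0].
Arguments Pn : clear implicits.
Arguments Ln : clear implicits.
Definition Xn n : set (pt n) := Pn n `|` Ln n.
Arguments Xn : clear implicits.

Definition shift_up n (a : pt n) (eps : R) : pt n :=
  fun i => if val i == n.-1 then eps else a i.

Definition tball n (a : pt n) (eps : R) : set (pt n) :=
  [set a] `|` eball (shift_up a eps) eps.

Definition basic_nbhd n (A : set (pt n)) (a : pt n) (V : set (pt n)) : Prop :=
  (Pn n a /\ exists eps : R, 0 < eps /\ eps < lastc a /\ V = eball a eps)
  \/ (A a /\ exists eps : R, 0 < eps /\ V = eball a eps `&` Xn n)
  \/ (Ln n a /\ ~ A a /\ exists eps : R, 0 < eps /\ V = tball a eps).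

Definition tau_open n (A : set (pt n)) (U : set (pt n)) : Prop :=
  U `<=` Xn n /\
  forall a, U a -> exists V, basic_nbhd A a V /\ V `<=` U.

Definition tau_Lindelof n (A : set (pt n)) : Prop :=
  forall C : set (set (pt n)),
    (forall U, C U -> tau_open A U) ->
    Xn n `<=` \bigcup_(U in C) U ->
    exists D : set (set (pt n)),
      D `<=` C /\ countable D /\ Xn n `<=` \bigcup_(U in D) U.

Definition closed_in_Ln n (B : set (pt n)) : Prop :=
  B `<=` Ln n /\
  forall x, Ln n x -> ~ B x ->
    exists eps : R, 0 < eps /\ eball x eps `&` Ln n `&` B = set0.

From HB Require Import structures.
From mathcomp Require Import all_boot all_order all_algebra.
From mathcomp Require Import all_classical all_reals.
From mathcomp Require Import Rstruct.
From Stdlib Require Import Rdefinitions.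
From mathcomp Require Import lra.
Set Implicit Arguments. Unset Strict Implicit.
Import Order.TTheory GRing.Theory Num.Theory.
Local Open Scope classical_set_scope.
Local Open Scope ring_scope.

(* Cover X_n by X_n \ B, which is open because B is closed in L_n, and by the
   sets {b} u P_n for b in B, which are open because b is not in A, so that
   the half-balls tangent at b are neighbourhoods of b.  The point b lies in no
   other member of this cover, so every subcover contains all the uncountably
   many sets {b} u P_n. *)

Lemma inj_image_sub_countable T U (f : T -> U) (A : set T) (D : set U) :
  {in A &, injective f} -> f @` A `<=` D -> countable D -> countable A.
Proof.
move=> f_inj fAD /countable_injP[g g_inj]; apply/countable_injP.
have fA_D x : x \in A -> f x \in D by rewrite !inE => Ax; apply: fAD; exists x.
exists (g \o f) => x y Ax Ay gfxy.
by apply: f_inj => //; apply: g_inj gfxy; exact: fA_D.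
Qed.

Section HalfSpace.

Variable n : nat.

Lemma coord_dist_le_edist (x a : pt n) (i : 'I_n) : `|x i - a i| <= edist x a.
Proof.
rewrite /edist -sqrtr_sqr; apply: ler_wsqrtr.
by rewrite (bigD1 i) //= lerDl; apply: sumr_ge0 => j _; exact: sqr_ge0.
Qed.

Lemma lastc_dist_le_edist (x a : pt n) : `|lastc x - lastc a| <= edist x a.
Proof.
rewrite /lastc; case: insubP => [i _ _|_]; first exact: coord_dist_le_edist.
by rewrite subr0 normr0 /edist sqrtr_ge0.
Qed.

Lemma eball_sub_Pn (a : pt n) (eps : R) : eps <= lastc a -> eball a eps `<=` Pn n.
Proof.
rewrite /eball /Pn => eps_le x /= xa.
have := lastc_dist_le_edist x a; rewrite distrC => dist_le.
have := ler_norm (lastc a - lastc x); lra.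
Qed.

Lemma Pn_notLn (x : pt n) : Pn n x -> ~ Ln n x.
Proof. by rewrite /Pn /Ln /= => + x0; rewrite x0 ltxx. Qed.

Lemma setU1_Pn_inj : {in Ln n &, injective (fun b => [set b] `|` Pn n)}.
Proof.
move=> b b' /[!inE] Lb Lb' ebb'.
have : ([set b'] `|` Pn n) b by rewrite -ebb'; left.
by case=> // /Pn_notLn.
Qed.

Lemma setU1_Pn_sub_subcover (B : set (pt n)) (D : set (set (pt n))) :
  B `<=` Ln n ->
  D `<=` [set Xn n `\` B] `|` (fun b => [set b] `|` Pn n) @` B ->
  Xn n `<=` \bigcup_(U in D) U ->
  (fun b => [set b] `|` Pn n) @` B `<=` D.
Proof.
move=> BL DC D_cover _ [b Bb <-]; have Lb := BL b Bb.
have [U DU Ub] := D_cover b (or_intror Lb).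
have [eU|[b' _ eU]] := DC U DU; first by move: Ub; rewrite eU => -[].
rewrite -eU in Ub; case: Ub => [->|/Pn_notLn/(_ Lb)[]].
by rewrite -eU in DU.
Qed.

Variable A : set (pt n).

Lemma Pn_basic_nbhd (a : pt n) :
  Pn n a -> exists2 V, basic_nbhd A a V & V `<=` Pn n.
Proof.
rewrite /Pn /= => a_pos; pose e := lastc a / 2.
have [e_gt0 e_lt] : 0 < e /\ e < lastc a by rewrite /e; split; lra.
exists (eball a e); first by left; split => //; exists e.
exact/eball_sub_Pn/ltW.
Qed.

Hypothesis n_gt0 : (0 < n)%nat.

Lemma lastc_shift_up (a : pt n) (eps : R) : lastc (shift_up a eps) = eps.
Proof.
rewrite /lastc; case: insubP => [i _ /eqP i_last|]; first by rewrite /shift_up i_last.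
by rewrite ltn_predL n_gt0.
Qed.

Lemma tball_basic_nbhd (a : pt n) : Ln n a -> ~ A a ->
  exists2 V, basic_nbhd A a V & V `<=` [set a] `|` Pn n.
Proof.
move=> La nAa; exists (tball a 1%:R).
  by right; right; do 2!split => //; exists 1%:R.
move=> x [->|xa]; [by left | right].
by apply: eball_sub_Pn xa; rewrite lastc_shift_up.
Qed.

Lemma tau_open_setU_Pn (S : set (pt n)) :
  S `<=` Ln n `\` A -> tau_open A (S `|` Pn n).
Proof.
move=> SLA; split=> [x [/SLA[Lx _]|Px]|a [Sa|Pa]]; [by right | by left | |].
  have [La nAa] := SLA a Sa.
  have [V aV Vsub] := tball_basic_nbhd La nAa.
  by exists V; split => // x /Vsub[->|]; [left | right].
have [V aV Vsub] := Pn_basic_nbhd Pa.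
by exists V; split => // x /Vsub; right.
Qed.

Lemma tau_open_setD_closed (B : set (pt n)) :
  closed_in_Ln B -> tau_open A (Xn n `\` B).
Proof.
move=> [BL B_closed]; split=> [x []//|a [[Pa|La] nBa]].
- have [V aV Vsub] := Pn_basic_nbhd Pa.
  exists V; split => // x /Vsub Px; split; first by left.
  by move=> /BL /(Pn_notLn Px).
- have [Aa|nAa] := pselect (A a).
    have [eps [eps_gt0 ball_B0]] := B_closed a La nBa.
    exists (eball a eps `&` Xn n); split; first by right; left; split => //; exists eps.
    move=> x [xa Xx]; split => // Bx.
    by have : set0 x by rewrite -ball_B0; do 2!split => //; exact: BL.
  have [V aV Vsub] := tball_basic_nbhd La nAa.
  exists V; split => // x /Vsub[->|Px]; first by split => //; right.
  by split; [left | move=> /BL /(Pn_notLn Px)].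
Qed.

End HalfSpace.

Theorem mainTheorem14 (n : nat) (A B : set (pt n)) :
  leq 2 n ->
  A `<=` Ln n ->
  B `<=` Ln n `\` A ->
  closed_in_Ln B ->
  ~ countable B ->
  ~ tau_Lindelof A.
Proof.
move=> n_ge2 _ BLA B_closed B_uncountable A_Lindelof.
have n_gt0 : (0 < n)%nat by apply: leq_trans n_ge2.
pose spike b := [set b] `|` Pn n.
pose C := [set Xn n `\` B] `|` spike @` B.
have [|x Xx|D [DC [D_countable D_cover]]] := A_Lindelof C.
- move=> _ [->|[b Bb <-]]; first exact: tau_open_setD_closed.
  by apply: tau_open_setU_Pn => // _ ->; exact: BLA.
- have [Bx|nBx] := pselect (B x); first by exists (spike x); [right; exists x | left].
  by exists (Xn n `\` B); [left | split].
apply/B_uncountable/(inj_image_sub_countable _ _ D_countable).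
  by apply: sub_in2 (setU1_Pn_inj (n:=n)) => b /[!inE] /BLA[].
by apply: setU1_Pn_sub_subcover DC D_cover => b /BLA[].
Qed.
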